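(* Let $\mathcal{D}$ be the arena of a $p$-periodic graph on $V$, $k\ge1$, and $\mathcal{A}^k$ an augmented $k$-arena of $\mathcal{D}$. Then $\mathcal{A}^k=\mathcal{A}^k_{\max}$ if and only if for every $k$-hyperedge $(t,X,y)\notin\mathcal{A}^k$, with $X=\langle x_1,\dots,x_k\rangle$, there is no $Z=\langle z_1,\dots,z_k\rangle\in[V]^k$ such that (1) $z_j\in\Gamma_t(x_j,\mathcal{D})$ for all $1\le j\le k$, and (2) $(t,y)$ is a shadow $k$-corner of $([t+1]_p,Z)$ with respect to $\mathcal{A}^k$.
   Context: Let $V$ be a finite set and $p\ge 1$ an integer; $[t]_p$ denotes $t\bmod p$. A $p$-periodic graph is the sequence of directed graphs $G_t=(V,E_{[t]_p})$ with $E_0,\dots,E_{p-1}\subseteq V\times V$ (self-loops allowed), each sinkless. Its arena $\mathcal{D}$ is the directed graph on $\mathbb{Z}_p\times V$ with $((i,u),([i+1]_p,v))\in E(\mathcal{D})$ iff $(u,v)\in E_i$; $\Gamma_t(u,\mathcal{D})=\{v:((t,u),([t+1]_p,v))\in E(\mathcal{D})\}$. $[V]^k$ denotes the set of multisets of $k$ elements of $V$. Game with $k$ cops: in each round $t$, with cops at $C=\langle c_1,\dots,c_k\rangle$ and robber at $r$, every cop $j$ must move to some $c_j'\in\Gamma_{[t]_p}(c_j,\mathcal{D})$; if some $c_j'=r$ the cops win; otherwise the robber must move to some $r'\in\Gamma_{[t]_p}(r,\mathcal{D})$ and the next round starts with cops at $\langle c_1',\dots,c_k'\rangle$ and robber at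 $r'$. A configuration $(t,C,r)$ ($t\in\mathbb{Z}_p$, $C\in[V]^k$, $r\in V$) is the state at the start of a round with index $\equiv t\pmod p$, cops to move; it is $k$-copwin if from it the cops can force capture in finitely many rounds against every robber strategy. A $k$-hyperedge is a triple $(t,X,y)$ with $t\in\mathbb{Z}_p$, $X\in[V]^k$, $y\in V$. The $k$-arena $\mathcal{D}^k$ is the set of $k$-hyperedges $(t,X,y)$ with $((t,x),([t+1]_p,y))\in E(\mathcal{D})$ for some $x\in X$. An augmented $k$-arena is a set $\mathcal{A}^k\supseteq\mathcal{D}^k$ of $k$-hyperedges such that each $(t,X,y)\in\mathcal{A}^k$ is a $k$-copwin configuration; $\mathcal{A}^k_{\max}$ is the maximum one (the union of all augmented $k$-arenas). For a set $\mathcal{A}^k$ of $k$-hyperedges, $\Gamma_t(X,\mathcal{A}^k)=\{y\in V:(t,X,y)\in\mathcal{A}^k\}$. Given $\mathcal{A}^k$, $(t,y)$ is a shadow $k$-corner of $([t+1]_p,Z)$, where $Z\in[V]^k$, if $y\notin Z$ and $\Gamma_t(y,\mathcal{D})\subseteq\Gamma_{[t+1]_p}(Z,\mathcal{A}^k)$. *)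

From mathcomp Require Import all_boot.
Set Implicit Arguments. Unset Strict Implicit. Unset Printing Implicit Defensive.

(* Multisets [V]^k : multiplicity functions V -> nat of total size k. *)
Definition mset (V : finType) (k : nat) :=
  {m : {ffun V -> nat} | \sum_(v : V) m v == k}.

Lemma sum_count_mem (V : finType) (s : seq V) :
  \sum_(v : V) count_mem v s = size s.
Proof.
elim: s => [|a s IH] /=; first by rewrite big1.
rewrite big_split /= IH (bigD1 a) //= eqxx big1 ?addn0 // => v /negbTE.
by rewrite eq_sym => ->.
Qed.

Lemma ms_proof (V : finType) (k : nat) (x : k.-tuple V) :
  \sum_(v : V) [ffun v => count_mem v x] v == k.
Proof.
under eq_bigr => v _ do rewrite ffunE.
by rewrite sum_count_mem size_tuple.
Qed.

(* ms x = the multiset <x_1, ..., x_k> of the entries of the tuple x. *)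
Definition ms (V : finType) (k : nat) (x : k.-tuple V) : mset V k :=
  exist _ [ffun v => count_mem v x] (ms_proof x).

Definition in_ms (V : finType) (k : nat) (X : mset V k) (v : V) : bool :=
  0 < sval X v.

(* A p-periodic graph: E i is the edge relation E_i, i : 'I_p.
   [t+1]_p is ordS t.  Gamma_t(u, D) = [set v | E t u v]. *)
Definition sinkless (V : finType) (p : nat) (E : 'I_p -> rel V) : Prop :=
  forall (i : 'I_p) (u : V), exists v : V, E i u v.

(* k-copwin configurations (t, C, r), cops to move: least fixed point
   (attractor) of "the cops have a move after which either the robber is
   caught, or every robber move leads to a copwin configuration". *)
Inductive copwin (V : finType) (p k : nat) (E : 'I_p -> rel V)
  : 'I_p -> mset V k -> V -> Prop :=
| copwin_step (t : 'I_p) (c c' : k.-tuple V) (r : V) :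
    (forall j : 'I_k, E t (tnth c j) (tnth c' j)) ->
    (r \in c' \/
     (forall r' : V, E t r r' -> copwin E (ordS t) (ms c') r')) ->
    copwin E t (ms c) r.

Definition hyperedges (V : finType) (p k : nat) := 'I_p -> mset V k -> V -> Prop.

Definition karena (V : finType) (p k : nat) (E : 'I_p -> rel V)
  : hyperedges V p k :=
  fun t X y => exists2 x : V, in_ms X x & E t x y.

Definition augmented_karena (V : finType) (p k : nat) (E : 'I_p -> rel V)
  (A : hyperedges V p k) : Prop :=
  (forall t X y, karena E t X y -> A t X y) /\
  (forall t X y, A t X y -> copwin E t X y).

Definition Amax (V : finType) (p k : nat) (E : 'I_p -> rel V)
  : hyperedges V p k :=
  fun t X y => exists2 A : hyperedges V p k, augmented_karena E A & A t X y.

Definition shadow_corner (V : finType) (p k : nat) (E : 'I_p -> rel V)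
  (A : hyperedges V p k) (t : 'I_p) (y : V) (Z : mset V k) : Prop :=
  ~~ in_ms Z y /\ (forall v : V, E t y v -> A (ordS t) Z v).

From mathcomp Require Import all_boot.
From Stdlib Require Import Classical.

Set Implicit Arguments.
Unset Strict Implicit.
Unset Printing Implicit Defensive.

(* Amax is exactly the set of copwin configurations: any single copwin
   configuration can be added to an augmented arena.  Hence A = Amax iff every
   copwin configuration lies in A.  If the cops can move from (t, X) onto a
   shadow corner (t, y) of ([t+1]_p, Z), then (t, X, y) is copwin, since every
   robber move lands on a copwin hyperedge of A; so maximality forbids such a
   move out of A.  Conversely, by induction on the attractor definition of
   copwin, a copwin (t, X, y) outside A is either caught in one move (then it
   is a hyperedge of D^k) or is such a move onto a shadow corner. *)

Lemma in_ms_ms (V : finType) (k : nat) (c : k.-tuple V) (v : V) :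
  in_ms (ms c) v = (v \in c).
Proof. by rewrite /in_ms /= ffunE -has_count has_pred1. Qed.

Section MaximalAugmentedArena.

Variables (V : finType) (p k : nat) (E : 'I_p -> rel V).

Definition shadow_corner_free (A : hyperedges V p k) : Prop :=
  forall (t : 'I_p) (X : mset V k) (y : V), ~ A t X y ->
    forall x : k.-tuple V, ms x = X ->
      ~ exists z : k.-tuple V,
          (forall j : 'I_k, E t (tnth x j) (tnth z j)) /\
          shadow_corner E A t y (ms z).

Lemma copwin_shadow_corner (A : hyperedges V p k) (t : 'I_p)
    (c z : k.-tuple V) (y : V) :
  (forall t X y, A t X y -> copwin E t X y) ->
  (forall j : 'I_k, E t (tnth c j) (tnth z j)) ->
  shadow_corner E A t y (ms z) -> copwin E t (ms c) y.
Proof.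
move=> A_copwin cz [_ Ay]; apply: copwin_step cz _.
by right=> y' /Ay /A_copwin.
Qed.

Lemma copwin_sub_shadow_corner_free (A : hyperedges V p k) :
  augmented_karena E A -> shadow_corner_free A ->
  forall t X y, copwin E t X y -> A t X y.
Proof.
move=> [DA _] Afree; fix IH 4 => t X y [{}t c z {}y cz yz].
case: (classic (A t (ms c) y)) => // nAy.
have A_caught : y \in z -> A t (ms c) y.
  case/tnthP=> j ->; apply: DA; exists (tnth c j); last exact: cz.
  by rewrite in_ms_ms mem_tnth.
case: (boolP (y \in z)) => [/A_caught //|yNz].
case: yz => [/A_caught //|z_copwin].
exfalso; apply: (Afree t _ y nAy c erefl); exists z; split => //.
by split=> [|v /z_copwin /IH]; first by rewrite in_ms_ms.
Qed.

Lemma augmented_karena_add (A : hyperedges V p k) (t : 'I_p) (X : mset V k)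
    (y : V) :
  augmented_karena E A -> copwin E t X y ->
  augmented_karena E (fun t' X' y' => A t' X' y' \/ (t', X', y') = (t, X, y)).
Proof.
move=> [DA A_copwin] Xy.
by split=> [t' X' y' /DA|t' X' y' [/A_copwin|[-> -> ->]]]; [left | |].
Qed.

Lemma Amax_copwin (t : 'I_p) (X : mset V k) (y : V) :
  Amax E t X y -> copwin E t X y.
Proof. by case=> A [_ A_copwin] /A_copwin. Qed.

Lemma copwin_Amax (A : hyperedges V p k) (t : 'I_p) (X : mset V k) (y : V) :
  augmented_karena E A -> copwin E t X y -> Amax E t X y.
Proof.
move=> augA Xy; exists (fun t' X' y' => A t' X' y' \/ (t', X', y') = (t, X, y)).
  exact: augmented_karena_add.
by right.
Qed.

Lemma augmented_karena_maxP (A : hyperedges V p k) :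
  augmented_karena E A ->
  (forall t X y, A t X y <-> Amax E t X y) <->
  (forall t X y, copwin E t X y -> A t X y).
Proof.
move=> augA; split=> [AE t X y /(copwin_Amax augA) /AE //|copwin_A t X y].
split=> [Ay|/Amax_copwin /copwin_A //]; by exists A.
Qed.

End MaximalAugmentedArena.

Theorem theorem8 (V : finType) (p k : nat) (E : 'I_p -> rel V)
  (hp : 0 < p) (hE : sinkless E) (hk : 0 < k)
  (A : hyperedges V p k) (hA : augmented_karena E A) :
  (forall t X y, A t X y <-> Amax E t X y) <->
  (forall (t : 'I_p) (X : mset V k) (y : V), ~ A t X y ->
     forall x : k.-tuple V, ms x = X ->
       ~ exists z : k.-tuple V,
           (forall j : 'I_k, E t (tnth x j) (tnth z j)) /\
           shadow_corner E A t y (ms z)).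
Proof.
apply: iff_trans (augmented_karena_maxP hA) _.
split=> [copwin_A | Afree]; last exact: copwin_sub_shadow_corner_free hA Afree.
move=> t X y nAy x xX [z [xz yz]]; apply: nAy; rewrite -xX; apply: copwin_A.
exact: copwin_shadow_corner hA.2 xz yz.
Qed.
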